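(* Let $\mathbb J=\mathbb N\times(\mathbb N\cup\{\infty\})$ ordered by $(j,k)\le(m,n)$ iff either ($j=m$ and $k\le n$) or ($n=\infty$ and $k\le m$), and let $X=(\mathbb J,\sigma(\mathbb J))$ carry the Scott topology. Then $X$ is a $d$-space, $Q(X)=Q_s(X)$, and $X$ is neither well-filtered nor $s$-well-filtered. In particular, a $d$-space need not be $s$-well-filtered.
   Context: A subset $U$ of a poset is Scott open if it is an upper set and for every directed $D$ with existing supremum, $\bigvee D\in U$ implies $D\cap U\neq\emptyset$. A $T_0$ space is a $d$-space if it is a dcpo in its specialization order and every open set is Scott open. $Q(X)$: nonempty compact saturated sets; $Q_s(X)$: nonempty strongly compact saturated sets, where $A$ is strongly compact if for every open $U\supseteq A$ there is finite $F$ with $A\subseteq\uparrow F\subseteq U$. A family is filtered if nonempty and any two members contain a third. $X$ is well-filtered (resp. $s$-well-filtered) if for every open $U$ and filtered $\mathcal K\subseteq Q(X)$ (resp. $\subseteq Q_s(X)$), $\bigcap\mathcal K\subseteq U$ implies $K\subseteq U$ for some $K\in\mathcal K$. *)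

From Stdlib Require Import List Arith.

Definition pset (T : Type) := T -> Prop.

Section Order.
Variable (T : Type) (le : T -> T -> Prop).

Definition upper_set (U : pset T) : Prop :=
  forall x y, U x -> le x y -> U y.

Definition directed (D : pset T) : Prop :=
  (exists d, D d) /\
  forall a b, D a -> D b -> exists c, D c /\ le a c /\ le b c.

Definition is_sup (D : pset T) (s : T) : Prop :=
  (forall d, D d -> le d s) /\
  (forall u, (forall d, D d -> le d u) -> le s u).

Definition scott_open (U : pset T) : Prop :=
  upper_set U /\
  forall D s, directed D -> is_sup D s -> U s -> exists d, D d /\ U d.

Definition dcpo : Prop :=
  forall D, directed D -> exists s, is_sup D s.
End Order.

Section Top.
Variable (T : Type) (O : pset (pset T)).

Definition subset (A B : pset T) : Prop := forall x, A x -> B x.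

Definition spec (x y : T) : Prop := forall U, O U -> U x -> U y.

Definition T0 : Prop := forall x y, spec x y -> spec y x -> x = y.

Definition d_space : Prop :=
  T0 /\ dcpo T spec /\ forall U, O U -> scott_open T spec U.

Definition up_list (F : list T) : pset T :=
  fun y => exists x, In x F /\ spec x y.

Definition compact (A : pset T) : Prop :=
  forall C : pset (pset T),
    (forall U, C U -> O U) ->
    (forall x, A x -> exists U, C U /\ U x) ->
    exists l : list (pset T),
      (forall U, In U l -> C U) /\ (forall x, A x -> exists U, In U l /\ U x).

Definition saturated (A : pset T) : Prop :=
  forall x, (forall U, O U -> subset A U -> U x) -> A x.

Definition strongly_compact (A : pset T) : Prop :=
  forall U, O U -> subset A U ->
    exists F : list T, subset A (up_list F) /\ subset (up_list F) U.

Definition inQ (A : pset T) : Prop :=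
  (exists x, A x) /\ compact A /\ saturated A.

Definition inQs (A : pset T) : Prop :=
  (exists x, A x) /\ strongly_compact A /\ saturated A.

Definition filtered (K : pset (pset T)) : Prop :=
  (exists A, K A) /\
  forall A B, K A -> K B -> exists C, K C /\ subset C A /\ subset C B.

Definition bigcap (K : pset (pset T)) : pset T := fun x => forall A, K A -> A x.

Definition well_filtered : Prop :=
  forall U (K : pset (pset T)), O U -> (forall A, K A -> inQ A) -> filtered K ->
    subset (bigcap K) U -> exists A, K A /\ subset A U.

Definition s_well_filtered : Prop :=
  forall U (K : pset (pset T)), O U -> (forall A, K A -> inQs A) -> filtered K ->
    subset (bigcap K) U -> exists A, K A /\ subset A U.
End Top.

(* ---------- The poset J = N x (N ∪ {∞}); None stands for ∞ ---------- *)
Definition J := (nat * option nat)%type.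

Definition le_inf (k n : option nat) : Prop :=
  match k, n with
  | _, None => True
  | Some a, Some b => a <= b
  | None, Some _ => False
  end.

Definition leJ (a b : J) : Prop :=
  let (j, k) := a in let (m, n) := b in
  (j = m /\ le_inf k n) \/ (n = None /\ le_inf k (Some m)).

Definition scottJ : pset (pset J) := scott_open J leJ.

(** A directed subset of [J] either has a greatest element or is a cofinal
    part of a column [{q} × N], whose supremum is [(q, ∞)].  Hence [J] is a
    dcpo, and its Scott-open sets are the upper sets [U] containing some
    [(q, n)] whenever they contain [(q, ∞)].  Such a [U] contains every
    [(p, ∞)] with [p >= k] as soon as it contains one finite point [(j, k)],
    so a set is compact exactly when its finite points lie in finitely many
    columns, and then it is even strongly compact: it lies above its column
    minima, a finite point of [U] and finitely many maximal points.  The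
    tails [{(p, ∞) | p >= n}] are therefore strongly compact; they form a
    filtered family with empty intersection, none of whose members lies in
    the empty open set. *)

From Stdlib Require Import List Arith Lia Wf_nat Classical FunctionalExtensionality PropExtensionality.

Lemma finite_choice {A B : Type} (S : B -> Prop) (R : A -> B -> Prop) (l : list A) :
  exists F : list B, (forall b, In b F -> S b) /\
    forall a, In a l -> (exists b, S b /\ R a b) -> exists b, In b F /\ R a b.
Proof.
  induction l as [|a l [F [HS HR]]].
  - exists nil. split; intros ? [].
  - destruct (classic (exists b, S b /\ R a b)) as [[b [Sb Rab]]|Hno].
    + exists (b :: F). split.
      * intros b' [<-|Fb']; auto.
      * intros a' [<-|la'] Hex; [exists b; simpl; auto|].
        destruct (HR a' la' Hex) as [b' [Fb' Rb']]. exists b'; simpl; auto.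
    + exists F. split; auto. intros a' [<-|la'] Hex; [contradiction|auto].
Qed.

Lemma nat_bounded_max (P : nat -> Prop) n :
  (forall k, P k -> k < n) -> (exists k, P k) ->
  exists m, P m /\ forall k, P k -> k <= m.
Proof.
  induction n as [|n IH]; intros Hbound [k Pk].
  - specialize (Hbound k Pk). lia.
  - destruct (classic (P n)) as [Pn|Pn].
    + exists n. split; auto. intros k' Pk'. specialize (Hbound k' Pk'). lia.
    + apply IH; eauto. intros k' Pk'. specialize (Hbound k' Pk').
      assert (k' <> n) by (intros ->; contradiction). lia.
Qed.

Lemma nat_min (P : nat -> Prop) n : P n -> exists m, P m /\ forall k, P k -> m <= k.
Proof.
  intros Pn.
  destruct (dec_inh_nat_subset_has_unique_least_element P (fun k => classic (P k)))
    as [m [[Pm Hmin] _]]; eauto.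
Qed.

Section ScottTopology.
Variables (T : Type) (le : T -> T -> Prop).

Lemma is_sup_greatest (D : pset T) g :
  D g -> (forall d, D d -> le d g) -> is_sup T le D g.
Proof. intros Dg Hg. split; auto. Qed.

Lemma is_sup_unique (D : pset T) s t :
  (forall x y, le x y -> le y x -> x = y) ->
  is_sup T le D s -> is_sup T le D t -> s = t.
Proof. intros antisym [Hs Ls] [Ht Lt]. apply antisym; auto. Qed.

Lemma scott_open_union (C : pset (pset T)) :
  (forall U, C U -> scott_open T le U) ->
  scott_open T le (fun x => exists U, C U /\ U x).
Proof.
  intros HC. split.
  - intros x y [U [CU Ux]] Hxy. exists U. split; auto. exact (proj1 (HC U CU) x y Ux Hxy).
  - intros D s Hdir Hsup [U [CU Us]].
    destruct (proj2 (HC U CU) D s Hdir Hsup Us) as [d [Dd Ud]]. eauto.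
Qed.

Hypothesis le_trans : forall x y z, le x y -> le y z -> le x z.

Lemma scott_open_not_below y : scott_open T le (fun z => ~ le z y).
Proof.
  split.
  - intros a b Ha Hab Hb. apply Ha. eauto.
  - intros D s _ [_ Hlub] Hs. apply NNPP. intros Hno. apply Hs, Hlub.
    intros d Dd. apply NNPP. intros Hd. eauto.
Qed.

Hypothesis le_refl : forall x, le x x.

Lemma spec_scott : spec T (scott_open T le) = le.
Proof.
  apply functional_extensionality; intros x.
  apply functional_extensionality; intros y.
  apply propositional_extensionality. split.
  - intros Hxy. apply NNPP. intros Hn.
    exact (Hxy _ (scott_open_not_below y) Hn (le_refl y)).
  - intros Hxy U [Hup _] Ux. eauto.
Qed.

Lemma saturated_scott (A : pset T) :
  saturated T (scott_open T le) A <-> upper_set T le A.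
Proof.
  split.
  - intros Hsat x y Ax Hxy. apply Hsat. intros U [Hup _] HAU. eauto.
  - intros Hup x Hx. apply NNPP. intros Ax.
    apply (Hx _ (scott_open_not_below x)); [|apply le_refl].
    intros a Aa Hax. eauto.
Qed.

Lemma dcpo_scott_d_space :
  (forall x y, le x y -> le y x -> x = y) -> dcpo T le -> d_space T (scott_open T le).
Proof.
  intros antisym Hdcpo. unfold d_space, T0. rewrite spec_scott. auto.
Qed.

End ScottTopology.

Section Compactness.
Variables (T : Type) (O : pset (pset T)).

Lemma up_list_subset (F : list T) U :
  O U -> (forall x, In x F -> U x) -> subset T (up_list T O F) U.
Proof. intros HU HF y [x [Fx Hxy]]. exact (Hxy U HU (HF x Fx)). Qed.

Lemma strongly_compact_compact (A : pset T) :
  (forall C, (forall U, C U -> O U) -> O (fun x => exists U, C U /\ U x)) ->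
  strongly_compact T O A -> compact T O A.
Proof.
  intros Hunion Hsc C HC Hcov.
  destruct (Hsc _ (Hunion C HC) Hcov) as [F [HAF HFU]].
  destruct (finite_choice C (fun x U => U x) F) as [l [HlC Hl]].
  exists l. split; auto.
  intros a Aa. destruct (HAF a Aa) as [x [Fx Hxa]].
  assert (Hx : exists U, C U /\ U x) by (apply HFU; exists x; split; auto; intros U _ Ux; exact Ux).
  destruct (Hl x Fx Hx) as [U [lU Ux]].
  exists U. split; auto. exact (Hxa U (HC U (HlC U lU)) Ux).
Qed.

Lemma well_filtered_s_well_filtered :
  (forall A, inQs T O A -> inQ T O A) -> well_filtered T O -> s_well_filtered T O.
Proof. intros HQ Hwf U K HU HK. apply Hwf; auto. Qed.

End Compactness.

Lemma leJ_refl x : leJ x x.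
Proof. destruct x as [j [k|]]; simpl; auto. Qed.

Lemma leJ_trans x y z : leJ x y -> leJ y z -> leJ x z.
Proof.
  destruct x as [a [k|]], y as [b [l|]], z as [c [m|]]; simpl;
    intuition (subst; try discriminate; auto; try lia).
Qed.

Lemma leJ_antisym x y : leJ x y -> leJ y x -> x = y.
Proof.
  destruct x as [a [k|]], y as [b [l|]]; simpl;
    intuition (subst; try discriminate; try contradiction; auto; f_equal; f_equal; lia).
Qed.

Lemma leJ_below_finite x p b : leJ x (p, Some b) -> exists a, x = (p, Some a) /\ a <= b.
Proof. destruct x as [a [k|]]; simpl; intuition (subst; try discriminate; eauto). Qed.

Lemma leJ_above_top p y : leJ (p, None) y -> y = (p, None).
Proof. destruct y as [b [l|]]; simpl; intuition (subst; try discriminate; auto). Qed.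

Lemma leJ_finite_top_inv j k p : leJ (j, Some k) (p, None) -> j = p \/ k <= p.
Proof. simpl. tauto. Qed.

Lemma leJ_column q a b : a <= b -> leJ (q, Some a) (q, Some b).
Proof. simpl. auto. Qed.

Lemma spec_scottJ : spec J scottJ = leJ.
Proof. exact (spec_scott J leJ leJ_trans leJ_refl). Qed.

Definition column (q : nat) : pset J := fun x => exists k, x = (q, Some k).

Definition in_column (D : pset J) (q : nat) : Prop := forall d, D d -> column q d.

Definition cofinal_in_column (D : pset J) (q : nat) : Prop :=
  forall n, exists k, n <= k /\ D (q, Some k).

Lemma column_directed q : directed J leJ (column q).
Proof.
  split; [exists (q, Some 0); exists 0; reflexivity|].
  intros a b [k ->] [l ->]. exists (q, Some (Nat.max k l)).
  split; [eexists; reflexivity|split; apply leJ_column; lia].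
Qed.

Lemma directed_in_column D :
  directed J leJ D -> (forall p, ~ D (p, None)) -> exists c, in_column D c.
Proof.
  intros [[[c [k0|]] Dd0] Hub] Hfin; [|contradiction (Hfin c)].
  exists c. intros [a [k|]] Dd; [|contradiction (Hfin a)].
  destruct (Hub _ _ Dd Dd0) as [[e [l|]] [De [L1 L2]]]; [|contradiction (Hfin e)].
  destruct (leJ_below_finite _ _ _ L1) as [? [E1 _]].
  destruct (leJ_below_finite _ _ _ L2) as [? [E2 _]].
  exists k. congruence.
Qed.

Lemma is_sup_cofinal D c :
  in_column D c -> cofinal_in_column D c -> is_sup J leJ D (c, None).
Proof.
  intros HD Hcof. split.
  - intros d Dd. destruct (HD d Dd) as [k ->]. simpl. auto.
  - intros [p [b|]] Hub.
    + destruct (Hcof (S b)) as [k [Hk Dk]].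
      destruct (leJ_below_finite _ _ _ (Hub _ Dk)) as [a [E Ha]].
      injection E as -> ->. lia.
    + destruct (Nat.eq_dec p c) as [->|Hne]; [apply leJ_refl|].
      destruct (Hcof (S p)) as [k [Hk Dk]].
      destruct (leJ_finite_top_inv _ _ _ (Hub _ Dk)); lia.
Qed.

Lemma directed_sup_cases D : directed J leJ D ->
  (exists g, D g /\ forall d, D d -> leJ d g) \/
  (exists c, in_column D c /\ cofinal_in_column D c).
Proof.
  intros Hdir. destruct (classic (exists p, D (p, None))) as [[p Dp]|Hno].
  - left. exists (p, None). split; auto. intros d Dd.
    destruct (proj2 Hdir _ _ Dp Dd) as [e [_ [L1 L2]]].
    apply leJ_above_top in L1. subst. exact L2.
  - destruct (directed_in_column D Hdir) as [c Hc]; [eauto|].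
    destruct (classic (cofinal_in_column D c)) as [Hcof|Hbdd]; [right; eauto|left].
    apply not_all_ex_not in Hbdd as [n Hn].
    destruct (nat_bounded_max (fun k => D (c, Some k)) n) as [m [Dm Hmax]].
    + intros k Dk. destruct (le_lt_dec n k); [exfalso; eauto|auto].
    + destruct (proj1 Hdir) as [d Dd]. destruct (Hc d Dd) as [k ->]. eauto.
    + exists (c, Some m). split; auto.
      intros d Dd. destruct (Hc d Dd) as [k ->]. apply leJ_column, Hmax, Dd.
Qed.

Lemma dcpoJ : dcpo J leJ.
Proof.
  intros D Hdir. destruct (directed_sup_cases D Hdir) as [[g [Dg Hg]]|[c [Hc Hcof]]].
  - exists g. apply is_sup_greatest; auto.
  - exists (c, None). apply is_sup_cofinal; auto.
Qed.

Lemma scottJ_iff U : scottJ U <->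
  upper_set J leJ U /\ forall q, U (q, None) -> exists n, U (q, Some n).
Proof.
  split.
  - intros [Hup Hdir]. split; auto. intros q Uq.
    assert (Hsup : is_sup J leJ (column q) (q, None)).
    { apply is_sup_cofinal; [intros d Dd; exact Dd|].
      intros n. exists n. split; [lia|exists n; reflexivity]. }
    destruct (Hdir _ _ (column_directed q) Hsup Uq) as [d [[n ->] Un]]. eauto.
  - intros [Hup Htop]. split; auto.
    intros D s Hdir Hsup Us.
    destruct (directed_sup_cases D Hdir) as [[g [Dg Hg]]|[c [Hc Hcof]]].
    + rewrite (is_sup_unique J leJ D s g leJ_antisym Hsup
                 (is_sup_greatest J leJ D g Dg Hg)) in Us.
      eauto.
    + rewrite (is_sup_unique J leJ D s (c, None) leJ_antisym Hsup
                 (is_sup_cofinal D c Hc Hcof)) in Us.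
      destruct (Htop c Us) as [n Un]. destruct (Hcof n) as [k [Hk Dk]].
      exists (c, Some k). split; auto. exact (Hup _ _ Un (leJ_column c n k Hk)).
Qed.

(* It omits the least point of [K] from every column other than [j], so
   finitely many of these open sets cover the finite points of [K] in only
   finitely many columns. *)
Definition column_cover (K : pset J) (j : nat) : pset J := fun x =>
  match x with
  | (_, None) => True
  | (q, Some n) => q = j \/ (forall m, ~ K (q, Some m)) \/ exists m, m < n /\ K (q, Some m)
  end.

Lemma column_cover_open K j : scottJ (column_cover K j).
Proof.
  apply scottJ_iff. split.
  - intros [q [a|]] y Hx Hxy; [|apply leJ_above_top in Hxy; subst; exact I].
    destruct y as [p [b|]]; [|exact I].
    destruct (leJ_below_finite _ _ _ Hxy) as [a' [E Hab]]. injection E as -> ->.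
    destruct Hx as [->|[Hno|[m [Hm Km]]]]; simpl; [left|right; left|right; right]; eauto.
    exists m. split; [lia|exact Km].
  - intros q _. destruct (classic (exists m, K (q, Some m))) as [[m Km]|Hno].
    + exists (S m). right; right. eauto.
    + exists 0. right; left. intros m Km. eauto.
Qed.

Lemma compact_finite_columns K :
  compact J scottJ K -> exists js, forall q n, K (q, Some n) -> In q js.
Proof.
  intros Hc.
  destruct (Hc (fun V => exists j, V = column_cover K j)) as [l [Hl HKl]].
  - intros V [j ->]. apply column_cover_open.
  - intros [q [n|]] _; exists (column_cover K q); split; eauto; simpl; auto.
  - destruct (finite_choice (fun _ => True) (fun V j => V = column_cover K j) l) as [js [_ Hjs]].
    exists js. intros q n. induction n as [n IH] using lt_wf_ind. intros Kn.
    destruct (HKl _ Kn) as [V [lV Vn]].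
    destruct (Hjs V lV) as [j [js_j ->]]; [destruct (Hl V lV) as [j ->]; eauto|].
    destruct Vn as [->|[Hno|[m [Hm Km]]]]; [auto|exfalso; eapply Hno; eauto|eauto].
Qed.

Lemma column_minima K js : exists F, (forall x, In x F -> K x) /\
  forall q n, In q js -> K (q, Some n) -> exists x, In x F /\ leJ x (q, Some n).
Proof.
  destruct (finite_choice K (fun q x => forall n, K (q, Some n) -> leJ x (q, Some n)) js)
    as [F [FK HF]].
  exists F. split; auto. intros q n js_q Kn.
  destruct (HF q js_q) as [x [Fx Hx]]; eauto.
  destruct (nat_min (fun k => K (q, Some k)) n Kn) as [m [Km Hmin]].
  exists (q, Some m). split; auto. intros k Kk. apply leJ_column, Hmin, Kk.
Qed.

Lemma tops_covered K U : scottJ U -> subset J K U ->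
  exists L, (forall x, In x L -> U x) /\
    forall p, K (p, None) -> exists x, In x L /\ leJ x (p, None).
Proof.
  intros HU HKU. apply scottJ_iff in HU as [_ Htop].
  destruct (classic (exists j, K (j, None))) as [[j Kj]|Hno];
    [|exists nil; split; [intros ? []|intros p Kp; exfalso; eauto]].
  destruct (Htop j (HKU _ Kj)) as [k Uk].
  destruct (finite_choice K (fun p x => x = (p, None)) (seq 0 k)) as [L [LK HL]].
  exists ((j, Some k) :: L). split.
  - intros x [<-|Lx]; auto.
  - intros p Kp. destruct (le_lt_dec k p) as [Hkp|Hpk].
    + exists (j, Some k). split; [left; reflexivity|simpl; auto].
    + destruct (HL p) as [x [Lx ->]]; [apply in_seq; lia|eauto|].
      exists (p, None). split; [right; exact Lx|apply leJ_refl].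
Qed.

Lemma finite_columns_strongly_compact K :
  (exists js, forall q n, K (q, Some n) -> In q js) -> strongly_compact J scottJ K.
Proof.
  intros [js Hjs] U HU HKU.
  destruct (column_minima K js) as [F [FK HF]].
  destruct (tops_covered K U HU HKU) as [L [LU HL]].
  exists (L ++ F). split.
  - unfold subset, up_list. rewrite spec_scottJ.
    intros [q [n|]] Kx.
    + destruct (HF q n (Hjs _ _ Kx) Kx) as [x [Fx Hx]].
      exists x. rewrite in_app_iff. auto.
    + destruct (HL q Kx) as [x [Lx Hx]].
      exists x. rewrite in_app_iff. auto.
  - apply up_list_subset; auto.
    intros x Hx. apply in_app_or in Hx as [Lx|Fx]; auto.
Qed.

Lemma inQ_inQs_scottJ A : inQ J scottJ A <-> inQs J scottJ A.
Proof.
  split; intros [HA [Hc Hsat]]; repeat split; auto.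
  - apply finite_columns_strongly_compact, compact_finite_columns, Hc.
  - apply strongly_compact_compact; auto.
    intros C HC. apply scott_open_union, HC.
Qed.

Definition tail (n : nat) : pset J := fun x =>
  match x with (p, None) => n <= p | _ => False end.

Lemma tail_inQs n : inQs J scottJ (tail n).
Proof.
  split; [exists (n, None); simpl; auto|split].
  - apply finite_columns_strongly_compact. exists nil. intros q m [].
  - apply (saturated_scott J leJ leJ_trans leJ_refl).
    intros [p [a|]] y Hx Hxy; [contradiction|].
    apply leJ_above_top in Hxy. subst. exact Hx.
Qed.

Lemma not_s_well_filtered_scottJ : ~ s_well_filtered J scottJ.
Proof.
  intros Hswf.
  destruct (Hswf (fun _ => False) (fun A => exists n, A = tail n)) as [A [[n ->] Hsub]].
  - split; [intros x y []|intros D s _ _ []].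
  - intros A [n ->]. apply tail_inQs.
  - split; [exists (tail 0); eauto|].
    intros A B [a ->] [b ->]. exists (tail (Nat.max a b)).
    split; [eauto|split; intros [p [c|]] Hx; simpl in *; auto; lia].
  - intros [p k] Hx. specialize (Hx (tail (S p)) (ex_intro _ _ eq_refl)).
    destruct k; simpl in Hx; [contradiction|lia].
  - exact (Hsub (n, None) (le_n n)).
Qed.

Theorem mainTheorem3 :
  d_space J scottJ /\
  (forall A : pset J, inQ J scottJ A <-> inQs J scottJ A) /\
  ~ well_filtered J scottJ /\
  ~ s_well_filtered J scottJ.
Proof.
  split; [exact (dcpo_scott_d_space J leJ leJ_trans leJ_refl leJ_antisym dcpoJ)|].
  split; [exact inQ_inQs_scottJ|].
  split; [|exact not_s_well_filtered_scottJ].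
  intros Hwf. apply not_s_well_filtered_scottJ.
  apply well_filtered_s_well_filtered; [intros A; apply inQ_inQs_scottJ|exact Hwf].
Qed.
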